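(* Let $k,\ell$ be positive integers. For integers $0\le j\le k$ define $$\left\langle \begin{matrix} k \\ j \end{matrix} \right\rangle (x, s, q, \ell) = \frac{\prod_{i=1}^k f(i\ell, x, s)}{\prod_{i=1}^j f(i\ell, x, q^{(j-i)\ell}s) \prod_{i=1}^{k-j} f(i\ell, x, q^{j\ell}s)}.$$ Then for all $n\in\mathbb{Z}$, $$\sum_{j=0}^{k+1} (-1)^{j+\ell \binom{j}{2}} \left( q^{\frac{(4j+1)\ell-3}{6}} s \right)^{\ell\binom{j}{2}} \left\langle \begin{matrix} k+1 \\ j \end{matrix} \right\rangle (x, s, q, \ell)\, f(n - j\ell, x, q^{j\ell} s)^k = 0.$$
   Context: Let $x,s,q$ be indeterminates; all quantities live in the field of rational functions in $x,s,q$. The Carlitz $q$-Fibonacci polynomials $f(n,x,s)$ are defined by $f(0,x,s)=0$, $f(1,x,s)=1$ and $f(n, x, s) = x f(n-1, x, s) + q^{n-2} s f(n-2, x, s)$; this recurrence is required to hold for all $n\in\mathbb{Z}$, which uniquely extends $f(n,x,s)$ to negative $n$. Here $f(n,x,q^a s)$ means $f(n,x,s)$ with $s$ replaced by $q^a s$. *)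

From HB Require Import structures.
From mathcomp Require Import all_boot all_order all_algebra.
From mathcomp Require Import fraction.
Set Implicit Arguments. Unset Strict Implicit. Unset Printing Implicit Defensive.
Import Order.TTheory GRing.Theory Num.Theory.
Local Open Scope ring_scope.

Section CFib.
Variable F : fieldType.
Variables q x s : F.

(* pospair m = (f m, f (m+1)) *)
Fixpoint cfib_pos (m : nat) : F * F :=
  match m with
  | 0%N => (0, 1)
  | m'.+1 => let: (a, b) := cfib_pos m' in (b, x * b + q ^+ m' * s * a)
  end.

(* cfib_neg m = (f (1-m), f (-m)), using f(n-2) = (f n - x f(n-1)) / (q^(n-2) s) *)
Fixpoint cfib_neg (m : nat) : F * F :=
  match m with
  | 0%N => (1, 0)
  | m'.+1 => let: (a, b) := cfib_neg m' in (b, (a - x * b) / (q ^ (Negz m') * s))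
  end.

Definition cfib (n : int) : F :=
  match n with
  | Posz m => (cfib_pos m).1
  | Negz m => (cfib_neg m.+1).2
  end.
End CFib.

(* The field of rational functions in x, s, q over the rationals:
   fractions of {poly {poly {poly rat}}}. *)
Definition R3 := {poly {poly {poly rat}}}.
Definition QF := {fraction R3}.
Definition Xx : QF := @FracField.tofrac R3 (('X : {poly rat})%:P)%:P.
Definition Xs : QF := @FracField.tofrac R3 ('X : {poly {poly rat}})%:P.
Definition Xq : QF := @FracField.tofrac R3 'X.

Definition f (n : int) (s' : QF) : QF := cfib Xq Xx s' n.

Definition qbrack (k j l : nat) : QF :=
  (\prod_(1 <= i < k.+1) f (i * l)%N Xs) /
  ((\prod_(1 <= i < j.+1) f (i * l)%N (Xq ^+ ((j - i) * l) * Xs)) *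
   (\prod_(1 <= i < (k - j).+1) f (i * l)%N (Xq ^+ (j * l) * Xs))).

(* exponent of q in (q^(((4j+1)l-3)/6) s)^(l*C(j,2)); it is an integer
   (exact division; truncated subtraction only matters when C(j,2)=0). *)
Definition qexp (j l : nat) : nat := ((((4 * j + 1) * l - 3) * (l * 'C(j, 2))) %/ 6)%N.

(* The shifted polynomials h_j(n) = f(n - j l, x, q^(j l) s) all satisfy the
   recurrence of f, so they are linear forms h_j = a_j u + b_j v in the
   coordinates u = f(n, x, s), v = cfib_co n of the two-dimensional solution
   space.  For k + 2 pairwise independent linear forms in two variables,
     sum_j h_j^k / prod_(i <> j) (a_j b_i - a_i b_j) = 0,
   a Lagrange interpolation identity proved by the divided-difference
   recursion.  The determinants a_j b_i - a_i b_j are Casoratians, which the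
   recurrence multiplies by -q^m s at each step; evaluated at n = i l, where
   h_i vanishes and h_i(n + 1) = 1, they become f((i - j) l, x, q^(j l) s)
   up to a monomial.  The coefficients of the theorem then turn every
   reciprocal product into one common constant.  The values f(m, x, q^a s),
   m > 0, are nonzero since at x = s = q = 1 they are Fibonacci numbers. *)

From HB Require Import structures.
From mathcomp Require Import all_boot all_order all_algebra.
From mathcomp Require Import fraction.
From mathcomp Require Import ring lra zify.
Set Implicit Arguments. Unset Strict Implicit.
Import Order.TTheory GRing.Theory Num.Theory.
Local Open Scope ring_scope.

Section CarlitzRecurrence.
Variables (F : fieldType) (q x s : F).
Hypotheses (q_neq0 : q != 0) (s_neq0 : s != 0).
Notation cf := (cfib q x s).

Lemma cfib_pos_rec m : cf m.+2 = x * cf m.+1 + q ^+ m * s * cf m.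
Proof. by rewrite /cfib /=; case: (cfib_pos q x s m). Qed.

Lemma cfib_neg_snd m : (cfib_neg q x s m).2 = cf (- m%:Z).
Proof. by case: m => [|m] //=; rewrite -NegzE. Qed.

Lemma cfib_neg_fst m : (cfib_neg q x s m).1 = cf (1 - m%:Z).
Proof.
case: m => [|m] //=; case E: (cfib_neg q x s m) => [a b] /=.
by have := cfib_neg_snd m; rewrite E /= => ->; congr cf; lia.
Qed.

Lemma cfib_neg_rec m :
  cf (1 - m%:Z) = x * cf (- m%:Z) + q ^ Negz m * s * cf (Negz m).
Proof.
have -> : cf (Negz m) = (cfib_neg q x s m.+1).2 by [].
rewrite /= -cfib_neg_fst -cfib_neg_snd; case: (cfib_neg q x s m) => [a b] /=.
have qs_neq0 : q ^ Negz m * s != 0 by rewrite mulf_neq0 // expfz_neq0.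
by rewrite [_ * ((_ - _) / _)]mulrC divfK // addrC subrK.
Qed.

Lemma cfib_rec (n : int) : cf n = x * cf (n - 1) + q ^ (n - 2) * s * cf (n - 2).
Proof.
case: n => [[|[|m]]|m].
- exact: (cfib_neg_rec 1).
- exact: (cfib_neg_rec 0).
- have [-> ->] : m.+2%:Z - 1 = m.+1 /\ m.+2%:Z - 2 = m by split; lia.
  exact: cfib_pos_rec.
- have := cfib_neg_rec m.+2; rewrite (_ : 1 - m.+2%:Z = Negz m); last by lia.
  have [-> ->] : Negz m - 1 = - m.+2%:Z /\ Negz m - 2 = Negz m.+2 by split; lia.
  done.
Qed.

End CarlitzRecurrence.

Section Solutions.
Variables (F : fieldType) (q x s : F).
Hypotheses (q_neq0 : q != 0) (s_neq0 : s != 0).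

Definition solution (h : int -> F) :=
  forall n : int, h n = x * h (n - 1) + q ^ (n - 2) * s * h (n - 2).

Lemma solution_nat h : solution h -> forall m : nat,
  h m.+2 = x * h m.+1 + q ^+ m * s * h m.
Proof.
move=> hsol m; rewrite hsol.
by have [-> ->] : m.+2%:Z - 1 = m.+1 /\ m.+2%:Z - 2 = m by split; lia.
Qed.

Lemma solution_back h : solution h -> forall n : int,
  h (n - 1) = (h (n + 1) - x * h n) / (q ^ (n - 1) * s).
Proof.
move=> hsol n; have qs_neq0 : q ^ (n - 1) * s != 0 by rewrite mulf_neq0 ?expfz_neq0.
rewrite (hsol (n + 1)) addrK (_ : n + 1 - 2 = n - 1); last by lia.
by rewrite addrAC subrr add0r mulrC mulKf.
Qed.

Lemma solution_eq h1 h2 : solution h1 -> solution h2 ->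
  h1 0 = h2 0 -> h1 1 = h2 1 -> h1 =1 h2.
Proof.
move=> sol1 sol2 e0 e1.
have up (m : nat) : h1 m = h2 m /\ h1 m.+1 = h2 m.+1.
  elim: m => [|m [IH1 IH2]] //.
  by split=> //; rewrite !solution_nat // IH1 IH2.
have down (m : nat) : h1 (- m%:Z) = h2 (- m%:Z) /\ h1 (1 - m%:Z) = h2 (1 - m%:Z).
  elim: m => [|m [IH1 IH2]] //.
  rewrite (_ : 1 - m.+1%:Z = - m%:Z); last by lia.
  split=> //; rewrite (_ : - m.+1%:Z = - m%:Z - 1); last by lia.
  rewrite (solution_back sol1) (solution_back sol2) (_ : - m%:Z + 1 = 1 - m%:Z).
    by rewrite IH1 IH2.
  by lia.
by case=> m; [case: (up m) | rewrite NegzE; case: (down m.+1)].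
Qed.

Lemma solutionD a b h1 h2 : solution h1 -> solution h2 ->
  solution (fun n => a * h1 n + b * h2 n).
Proof. by move=> sol1 sol2 n; rewrite {1}sol1 {1}sol2; ring. Qed.

Lemma solution_cfib_shift (a : nat) :
  solution (fun n => cfib q x (q ^+ a * s) (n - a%:Z)).
Proof.
move=> n; have qs_neq0 : q ^+ a * s != 0 by rewrite mulf_neq0 ?expf_neq0.
rewrite (cfib_rec x q_neq0 qs_neq0) mulrA -[q ^+ a]/(q ^ a%:Z) -expfzDr //.
have [-> -> ->] : [/\ n - a%:Z - 2 + a%:Z = n - 2, n - a%:Z - 1 = n - 1 - a%:Z
  & n - a%:Z - 2 = n - 2 - a%:Z] by split; lia.
done.
Qed.

(* The solution with initial values 1 and 0 at n = 0 and n = 1. *)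
Definition cfib_co (n : int) := s * cfib q x (q * s) (n - 1).

Lemma solution_cfib_co : solution cfib_co.
Proof.
move=> n; have := solution_cfib_shift 1 n; rewrite expr1 /cfib_co => ->.
by ring.
Qed.

Lemma cfib_co0 : cfib_co 0 = 1.
Proof.
rewrite /cfib_co /= -[q ^ Negz 0]/(q ^+ 1)^-1 expr1 mulr0 subr0.
by field; rewrite q_neq0 s_neq0.
Qed.

Lemma solution_decomp h : solution h ->
  forall n, h n = h 1 * cfib q x s n + h 0 * cfib_co n.
Proof.
move=> hsol; apply: (@solution_eq h (fun n => h 1 * cfib q x s n + h 0 * cfib_co n) hsol).
- by apply: solutionD; [exact: cfib_rec | exact: solution_cfib_co].
- by rewrite cfib_co0 mulr0 add0r mulr1.
- by rewrite /cfib_co subrr /= mulr0 mulr0 mulr1 addr0.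
Qed.

Definition casoratian (h1 h2 : int -> F) (m : nat) :=
  h1 m.+1 * h2 m - h2 m.+1 * h1 m.

Definition cas_factor (m : nat) := (-1) ^+ m * q ^+ 'C(m, 2) * s ^+ m.

Lemma cas_factor_neq0 m : cas_factor m != 0.
Proof. by rewrite !mulf_neq0 ?signr_eq0 ?expf_neq0. Qed.

Lemma cas_factorS m : cas_factor m.+1 = - (q ^+ m * s) * cas_factor m.
Proof. by rewrite /cas_factor binS bin1 !exprS exprD; ring. Qed.

Lemma casoratianS h1 h2 : solution h1 -> solution h2 ->
  forall m, casoratian h1 h2 m.+1 = - (q ^+ m * s) * casoratian h1 h2 m.
Proof. by move=> sol1 sol2 m; rewrite /casoratian !solution_nat //; ring. Qed.

Lemma casoratianE h1 h2 : solution h1 -> solution h2 ->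
  forall m, casoratian h1 h2 m = cas_factor m * casoratian h1 h2 0.
Proof.
move=> sol1 sol2; elim=> [|m IH]; first by rewrite /cas_factor !expr0 !mul1r.
by rewrite casoratianS // IH cas_factorS mulrA.
Qed.

End Solutions.

Section TwoVariableInterpolation.
Variables (F : fieldType) (I : eqType) (a b : I -> F) (u v : F).

Definition cross i j := a i * b j - a j * b i.
Definition form i := a i * u + b i * v.

Definition interp_sum (r : seq I) (m : nat) :=
  \sum_(j <- r) form j ^+ m / \prod_(i <- rem j r) cross j i.

Definition pairwise_indep (r : seq I) := {in r &, forall i j, i != j -> cross i j != 0}.

Lemma crossC i j : cross i j = - cross j i.
Proof. by rewrite /cross opprB. Qed.

Lemma cross_form i0 i1 j :
  cross i0 i1 * form j = form i0 * cross j i1 - form i1 * cross j i0.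
Proof. by rewrite /cross /form; ring. Qed.

Lemma prod_cross_rem_neq0 r j : uniq r -> pairwise_indep r -> j \in r ->
  \prod_(i <- rem j r) cross j i != 0.
Proof.
move=> r_uniq r_indep jr; rewrite prodf_seq_neq0; apply/allP => i.
by rewrite mem_rem_uniq // => /andP[ij ir]; apply: r_indep; rewrite // eq_sym.
Qed.

Lemma interp_sum_rec i0 i1 t m : uniq [:: i0, i1 & t] ->
  pairwise_indep [:: i0, i1 & t] ->
  cross i0 i1 * interp_sum [:: i0, i1 & t] m.+1 =
  form i0 * interp_sum (i0 :: t) m - form i1 * interp_sum (i1 :: t) m.
Proof.
move=> r_uniq r_indep; have /and3P[] := r_uniq.
rewrite !inE negb_or => /andP[i01 i0t] i1t t_uniq.
have c01 : cross i0 i1 != 0 by apply: r_indep; rewrite ?inE ?eqxx ?orbT.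
have P_neq0 i : i \in [:: i0, i1 & t] -> \prod_(j <- rem i t) cross i j != 0.
  move=> ir; rewrite prodf_seq_neq0; apply/allP => j.
  rewrite mem_rem_uniq // => /andP[ji jt]; apply/implyP => _.
  by apply: r_indep; rewrite // ?inE ?jt ?orbT // eq_sym.
have ne0 j : j \in t -> (i0 == j) = false by move=> jt; apply: contraNF i0t => /eqP ->.
have ne1 j : j \in t -> (i1 == j) = false by move=> jt; apply: contraNF i1t => /eqP ->.
rewrite /interp_sum !big_cons /= !eqxx (negPf i01) !big_cons.
set S := \sum_(j <- t) _; set S0 := \sum_(j <- t) _; set S1 := \sum_(j <- t) _.
rewrite !mulrDr.
have -> : cross i0 i1 * S = form i0 * S0 - form i1 * S1.
  rewrite /S /S0 /S1 !mulr_sumr -sumrB; apply: eq_big_seq => j jt.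
  rewrite (ne0 j jt) (ne1 j jt) !big_cons.
  have jr : j \in [:: i0, i1 & t] by rewrite !inE jt !orbT.
  have cj0 : cross j i0 != 0 by apply: r_indep; rewrite // ?inE ?eqxx // eq_sym ne0.
  have cj1 : cross j i1 != 0 by apply: r_indep; rewrite // ?inE ?eqxx ?orbT // eq_sym ne1.
  have Pj := P_neq0 j jr.
  rewrite exprS !mulrA cross_form; field.
  by apply/and3P; split; [exact: Pj | |].
have := P_neq0 i0; rewrite rem_id ?inE ?eqxx // => /(_ isT) P0.
have := P_neq0 i1; rewrite rem_id ?inE ?eqxx ?orbT // => /(_ isT) P1.
rewrite (crossC i1 i0) !exprS; field.
by apply/and4P; split; [exact: P1 | exact: P0 | rewrite oppr_eq0 | ].
Qed.

Lemma interp_sum_eq0 m r : uniq r -> pairwise_indep r -> size r = m.+2 ->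
  interp_sum r m = 0.
Proof.
elim: m r => [|m IH] [//|i0 [//|i1 t]] r_uniq r_indep /= [t_size].
  case: t t_size r_uniq {r_indep} => // _; rewrite /= inE andbT => i01.
  rewrite /interp_sum !big_cons big_nil /= !eqxx (negPf i01) !big_cons !big_nil.
  by rewrite (crossC i1 i0) !expr0 !mulr1 !mul1r invrN addr0 subrr.
have c01 : cross i0 i1 != 0.
  apply: r_indep; rewrite ?inE ?eqxx ?orbT //.
  by case/andP: r_uniq; rewrite inE negb_or => /andP[].
apply: (mulfI c01); rewrite interp_sum_rec // mulr0 !IH //; first by ring.
- by case/andP: r_uniq.
- apply: sub_in2 r_indep => j; rewrite !inE => /orP[->|jt]; by rewrite ?jt !orbT.
- by rewrite /= t_size.
- case/and3P: r_uniq; rewrite inE negb_or => /andP[_ i0t] _ t_uniq.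
  by rewrite /= i0t.
- apply: sub_in2 r_indep => j; rewrite !inE => /orP[-> //|jt]; by rewrite jt !orbT.
- by rewrite /= t_size.
Qed.
End TwoVariableInterpolation.

Lemma bin2_double n : ('C(n, 2) * 2 + n = n * n)%N.
Proof. by elim: n => // n IH; rewrite binS bin1; nia. Qed.

Lemma bin2_rat n : ('C(n, 2))%:R = n%:R * (n%:R - 1) / 2 :> rat.
Proof.
have := congr1 (fun m => m%:R : rat) (bin2_double n); rewrite /= !natrD !natrM => e.
by apply: (mulIf (x := 2)) => //; rewrite divfK //; lra.
Qed.

Lemma sum_bin2_rat j l : (\sum_(0 <= i < j.+1) 'C(i * l, 2))%:R =
  l%:R ^+ 2 * j%:R * (j%:R + 1) * (2 * j%:R + 1) / 12 - l%:R * j%:R * (j%:R + 1) / 4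
  :> rat.
Proof.
elim: j => [|j IH]; first by rewrite big_nat1 mul0n bin2_rat; field => //.
by rewrite big_nat_recr //= natrD IH bin2_rat natrM -addn1 natrD; field => //.
Qed.

Lemma qexp_sum j l : (0 < l)%N ->
  (qexp j l + \sum_(0 <= i < j.+1) 'C(i * l, 2) = j * 'C(j * l, 2))%N.
Proof.
move=> l_gt0; rewrite /qexp.
suff : ((((4 * j + 1) * l - 3) * (l * 'C(j, 2))) +
        6 * \sum_(0 <= i < j.+1) 'C(i * l, 2) = 6 * (j * 'C(j * l, 2)))%N by lia.
case: j => [|j]; first by rewrite big_nat1 mul0n /= !muln0.
have le3 : (3 <= (4 * j.+1 + 1) * l)%N by nia.
have := sum_bin2_rat j.+1 l; have := bin2_rat (j.+1 * l); have := bin2_rat j.+1.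
move: ('C(j.+1, 2)) ('C(j.+1 * l, 2)) (\sum_(0 <= i < j.+2) 'C(i * l, 2))%N => c1 c2 S e1 e2 eS.
apply/eqP; rewrite -(eqr_nat rat); apply/eqP.
rewrite !natrD !natrM natrB // !natrM !natrD e1 e2 eS natrM -nat1r.
by field.
Qed.

Lemma cas_factor_prod (F : fieldType) (q s : F) j l : (0 < l)%N ->
  (-1) ^+ (j + l * 'C(j, 2)) * (q ^+ qexp j l * s ^+ (l * 'C(j, 2))) * (-1) ^+ j *
  \prod_(0 <= i < j.+1) cas_factor q s (i * l) = cas_factor q s (j * l) ^+ j.
Proof.
move=> l_gt0; rewrite !big_split /= !prodrXr.
have es : (l * 'C(j, 2) + \sum_(0 <= i < j.+1) i * l = j * l * j)%N.
  rewrite -big_distrl /= bin2_sum binS bin1; have := bin2_double j; nia.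
have eq : (qexp j l + \sum_(0 <= i < j.+1) 'C(i * l, 2) = 'C(j * l, 2) * j)%N.
  by rewrite qexp_sum // mulnC.
have esg : (j + l * 'C(j, 2) + j + \sum_(0 <= i < j.+1) i * l = j * l * j + 2 * j)%N.
  by rewrite -es; lia.
transitivity ((-1) ^+ (j + l * 'C(j, 2) + j + \sum_(0 <= i < j.+1) i * l) *
   q ^+ (qexp j l + \sum_(0 <= i < j.+1) 'C(i * l, 2)) *
   s ^+ (l * 'C(j, 2) + \sum_(0 <= i < j.+1) i * l)).
  by rewrite !exprD; ring.
by rewrite esg eq es /cas_factor exprD (exprM (-1) 2) sqrrN !expr1n mulr1 !exprMn !exprM.
Qed.

(* [cfib_pos] over a commutative ring, to be transported along ring morphisms. *)
Fixpoint rfib (R : comNzRingType) (q x s : R) (m : nat) : R * R :=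
  if m is m'.+1 then let: (a, b) := rfib q x s m' in (b, x * b + q ^+ m' * s * a)
  else (0, 1).

Lemma cfib_pos_rfib (F : fieldType) (q x s : F) m : cfib_pos q x s m = rfib q x s m.
Proof. by elim: m => //= m ->. Qed.

Lemma rmorph_rfib (R S : comNzRingType) (g : {rmorphism R -> S}) q x s m :
  (g (rfib q x s m).1, g (rfib q x s m).2) = rfib (g q) (g x) (g s) m.
Proof.
elim: m => [|m IH] /=; first by rewrite rmorph0 rmorph1.
by case: (rfib q x s m) IH => a b /= <- /=; rewrite rmorphD !rmorphM rmorphXn.
Qed.

Lemma rmorph_rfib1 (R S : comNzRingType) (g : {rmorphism R -> S}) q x s m :
  g (rfib q x s m).1 = (rfib (g q) (g x) (g s) m).1.
Proof. by rewrite -rmorph_rfib. Qed.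

Lemma fibonacci_gt0 m : (0 < m)%N -> 0 < (rfib (1 : rat) 1 1 m).1.
Proof.
have fib_ge0 n : 0 <= (rfib (1 : rat) 1 1 n).1 /\ 0 < (rfib (1 : rat) 1 1 n).2.
  elim: n => [|n] //=; case: (rfib 1 1 1 n) => a b /= [a_ge0 b_gt0].
  by rewrite expr1n !mul1r ltW // ltr_wpDr.
by case: m => // m _ /=; case: (fib_ge0 m); case: (rfib 1 1 1 m).
Qed.

Lemma f_neq0 m a : (0 < m)%N -> f m (Xq ^+ a * Xs) != 0.
Proof.
move=> m_gt0; pose ev : {rmorphism R3 -> rat} :=
  horner_eval 1 \o horner_eval 1 \o horner_eval 1.
pose qp : R3 := 'X; pose xp : R3 := (('X : {poly rat})%:P)%:P.
pose sp : R3 := ('X : {poly {poly rat}})%:P.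
have -> : Xq ^+ a * Xs = tofrac (qp ^+ a * sp) by rewrite tofracM tofracXn.
rewrite /f /cfib cfib_pos_rfib -[Xq]/(tofrac qp) -[Xx]/(tofrac xp).
rewrite -(rmorph_rfib1 (@tofrac R3 : {rmorphism R3 -> QF})) tofrac_eq0.
apply: contraTneq (fibonacci_gt0 m_gt0) => /(congr1 ev); rewrite rmorph_rfib1 rmorph0.
have [-> -> ->] : [/\ ev qp = 1, ev xp = 1 & ev (qp ^+ a * sp) = 1].
  by rewrite /ev /= !rmorphM !rmorphXn /= /horner_eval !hornerE expr1n.
by move=> ->; rewrite ltxx.
Qed.

Lemma prod_rem_index_iota (R : comNzRingType) (G : nat -> R) j n : (j < n)%N ->
  \prod_(i <- rem j (index_iota 0 n)) G i =
  (\prod_(0 <= i < j) G i) * \prod_(j.+1 <= i < n) G i.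
Proof.
move=> jn; rewrite rem_filter ?iota_uniq // big_filter.
rewrite [LHS](big_cat_nat (n := j)) ?(ltnW jn) //= (big_ltn_cond (m := j)) // eqxx.
by congr (_ * _); rewrite big_mkcond; apply: eq_big_nat => i /andP[? ?];
  rewrite ifT // neq_ltn; apply/orP; lia.
Qed.

Section CarlitzPowerIdentity.
Variables (F : fieldType) (q x s : F) (k l : nat).
Hypotheses (q_neq0 : q != 0) (s_neq0 : s != 0) (l_gt0 : (0 < l)%N).
Hypothesis cfib_neq0 : forall m a, (0 < m)%N -> cfib q x (q ^+ a * s) m != 0.

Definition fshift (j : nat) (n : int) := cfib q x (q ^+ (j * l) * s) (n - (j * l)%N%:Z).

Definition bracket (K j : nat) :=
  (\prod_(1 <= i < K.+1) cfib q x s (i * l)%N) /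
  ((\prod_(1 <= i < j.+1) cfib q x (q ^+ ((j - i) * l) * s) (i * l)%N) *
   (\prod_(1 <= i < (K - j).+1) cfib q x (q ^+ (j * l) * s) (i * l)%N)).

Definition coef (j : nat) :=
  (-1) ^+ (j + l * 'C(j, 2)) * (q ^+ qexp j l * s ^+ (l * 'C(j, 2))).

Notation cross := (cross (fun j => fshift j 1) (fun j => fshift j 0)).

Lemma fshift_mul j i : (j <= i)%N ->
  fshift j (i * l)%N = cfib q x (q ^+ (j * l) * s) ((i - j) * l)%N.
Proof.
move=> ji; rewrite /fshift mulnBl; congr cfib.
have : (j * l <= i * l)%N by rewrite leq_mul2r ji orbT.
lia.
Qed.

Lemma fshift_mul_neq0 j i : (j < i)%N -> fshift j (i * l)%N != 0.
Proof.
by move=> ji; rewrite fshift_mul 1?ltnW // cfib_neq0 // muln_gt0 subn_gt0 ji.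
Qed.

Lemma cross_lt j i : (j < i)%N ->
  cross j i = - fshift j (i * l)%N / cas_factor q s (i * l).
Proof.
move=> ji; have := casoratianE q_neq0 s_neq0 (solution_cfib_shift x q_neq0 s_neq0 (j * l))
  (solution_cfib_shift x q_neq0 s_neq0 (i * l)) (i * l).
rewrite /casoratian subrr (_ : (i * l).+1%:Z - (i * l)%N%:Z = 1); last by lia.
rewrite /= mulr0 mul1r sub0r -/(fshift j (i * l)%N) => ->.
by rewrite mulrC mulKf ?cas_factor_neq0.
Qed.

Lemma pairwise_indep_iota N :
  pairwise_indep (fun j => fshift j 1) (fun j => fshift j 0) (index_iota 0 N).
Proof.
have lt_neq0 j i : (j < i)%N -> cross j i != 0.
  move=> ji; rewrite cross_lt // mulf_neq0 ?oppr_eq0 ?invr_eq0 //.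
    exact: fshift_mul_neq0.
  exact: cas_factor_neq0.
move=> i j _ _; case: ltngtP => // [ij | ji] _; first exact: lt_neq0.
by rewrite crossC oppr_eq0 lt_neq0.
Qed.

Lemma prod_fshift_lt j :
  \prod_(0 <= i < j) fshift i (j * l)%N =
  \prod_(1 <= i < j.+1) cfib q x (q ^+ ((j - i) * l) * s) (i * l)%N.
Proof.
rewrite big_add1 /= big_nat_rev /=; apply: eq_big_nat => i ij.
by rewrite fshift_mul ?add0n; [congr (cfib _ _ (_ ^+ (_ * _) * _) (_ * _)%N); lia | lia].
Qed.

Lemma prod_fshift_gt K j : (j <= K)%N ->
  \prod_(j.+1 <= i < K.+1) fshift j (i * l)%N =
  \prod_(1 <= i < (K - j).+1) cfib q x (q ^+ (j * l) * s) (i * l)%N.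
Proof.
move=> jK; rewrite -add1n big_addn -subSn //; apply: eq_big_nat => i ij.
by rewrite fshift_mul ?addnK // leq_addl.
Qed.

Lemma prod_cross j : (j < k.+2)%N ->
  \prod_(i <- rem j (index_iota 0 k.+2)) cross j i =
  (\prod_(0 <= i < j) fshift i (j * l)%N) / cas_factor q s (j * l) ^+ j *
  ((-1) ^+ (k.+1 - j) * \prod_(j.+1 <= i < k.+2) fshift j (i * l)%N /
   \prod_(j.+1 <= i < k.+2) cas_factor q s (i * l)).
Proof.
move=> jk; rewrite prod_rem_index_iota //; congr (_ * _).
- rewrite [LHS](eq_big_nat _ _ (F2 := fun i => fshift i (j * l)%N / cas_factor q s (j * l))).
    by rewrite prodf_div prodr_const_nat subn0.
  by move=> i ij; rewrite crossC cross_lt ?mulNr ?opprK //; lia.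
- rewrite [LHS](eq_big_nat _ _ (F2 := fun i => -1 * (fshift j (i * l)%N / cas_factor q s (i * l)))).
    by rewrite big_split /= prodr_const_nat prodf_div subSS mulrA.
  by move=> i ji; rewrite cross_lt ?mulN1r ?mulNr //; lia.
Qed.

Definition coef_const := (\prod_(1 <= i < k.+2) cfib q x s (i * l)%N) * (-1) ^+ k.+1 /
  \prod_(0 <= i < k.+2) cas_factor q s (i * l).

Lemma coef_bracket_prod_cross j : (j < k.+2)%N ->
  coef j * bracket k.+1 j * \prod_(i <- rem j (index_iota 0 k.+2)) cross j i = coef_const.
Proof.
move=> jk; rewrite prod_cross // /bracket -prod_fshift_lt -prod_fshift_gt; last by lia.
have prod_neq0 (G : nat -> F) m n : (forall i, (m <= i < n)%N -> G i != 0) ->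
    \prod_(m <= i < n) G i != 0.
  move=> G_neq0; rewrite prodf_seq_neq0; apply/allP => i.
  by rewrite mem_index_iota => /G_neq0 ->; rewrite implybT.
have cas_neq0 m n : \prod_(m <= i < n) cas_factor q s (i * l) != 0.
  by apply: prod_neq0 => i _; apply: cas_factor_neq0.
have D1_neq0 : \prod_(0 <= i < j) fshift i (j * l)%N != 0.
  by apply: prod_neq0 => i /andP[_ ij]; apply: fshift_mul_neq0.
have D2_neq0 : \prod_(j.+1 <= i < k.+2) fshift j (i * l)%N != 0.
  by apply: prod_neq0 => i /andP[ji _]; apply: fshift_mul_neq0.
have coef_neq0 : coef j != 0 by rewrite !mulf_neq0 ?signr_eq0 ?expf_neq0.
have -> : cas_factor q s (j * l) ^+ j =
    ((-1) ^+ j)^-1 * (coef j * \prod_(0 <= i < j.+1) cas_factor q s (i * l)).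
  by rewrite invr_sign -(cas_factor_prod q s j l_gt0) /coef; ring.
rewrite /coef_const (_ : \prod_(0 <= i < k.+2) _ =
    \prod_(0 <= i < j.+1) cas_factor q s (i * l) *
    \prod_(j.+1 <= i < k.+2) cas_factor q s (i * l)); last by rewrite -big_cat_nat.
have -> : (-1) ^+ k.+1 = (-1) ^+ (k.+1 - j) * (-1) ^+ j :> F.
  by rewrite -exprD subnK //; lia.
field.
by rewrite signr_eq0 coef_neq0 D1_neq0 D2_neq0 !cas_neq0.
Qed.

Theorem carlitz_power_sum n :
  \sum_(0 <= j < k.+2) coef j * bracket k.+1 j * fshift j n ^+ k = 0.
Proof.
have interp0 := interp_sum_eq0 (cfib q x s n) (cfib_co q x s n)
  (iota_uniq 0 k.+2 : uniq (index_iota 0 k.+2))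
  (pairwise_indep_iota (N := k.+2)) (size_iota 0 k.+2).
rewrite -[RHS](mulr0 coef_const) -[in RHS]interp0 mulr_sumr.
apply: eq_big_seq => j; rewrite mem_index_iota => /andP[_ jk].
have fshift_form : form (fun j => fshift j 1) (fun j => fshift j 0)
    (cfib q x s n) (cfib_co q x s n) j = fshift j n.
  by rewrite [RHS](solution_decomp q_neq0 s_neq0 (solution_cfib_shift x q_neq0 s_neq0 _)).
have B_neq0 := prod_cross_rem_neq0 (iota_uniq 0 k.+2 : uniq (index_iota 0 k.+2))
  (pairwise_indep_iota (N := k.+2)) (_ : j \in index_iota 0 k.+2).
rewrite fshift_form -(coef_bracket_prod_cross jk); field.
by apply: B_neq0; rewrite mem_index_iota.
Qed.

End CarlitzPowerIdentity.

Lemma Xq_neq0 : Xq != 0.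
Proof. by rewrite /Xq tofrac_eq0 polyX_eq0. Qed.

Lemma Xs_neq0 : Xs != 0.
Proof. by rewrite /Xs tofrac_eq0 polyC_eq0 polyX_eq0. Qed.

Theorem theorem3 (k l : nat) (hk : (0 < k)%N) (hl : (0 < l)%N) (n : int) :
  \sum_(0 <= j < k.+2)
     (-1) ^+ (j + l * 'C(j, 2)) * (Xq ^+ qexp j l * Xs ^+ (l * 'C(j, 2)))
     * qbrack k.+1 j l * f (n - ((j * l)%N)%:Z) (Xq ^+ (j * l) * Xs) ^+ k = 0.
Proof.
exact: (carlitz_power_sum k Xq_neq0 Xs_neq0 hl f_neq0 n).
Qed.
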